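(* Let $X$ be a discrete random variable and $U$ a continuously distributed random variable with $U\sim\mathrm{Unif}[0,1]$, and let $\mathcal{T}\subseteq\mathbb{R}$. Then $U$ is $\mathcal{T}$-independent of $X$ if and only if \[ \mathbb{E}\big(\Pr(X=x\mid U)\mid U\in(t_1,t_2)\big)=\Pr(X=x)\quad\text{for all }x\in\operatorname{supp}(X) \] for all $t_1,t_2\in\mathcal{T}\cup\{0,1\}$ with $t_1<t_2$.
   Context: $U$ is $\mathcal{T}$-independent of $X$ if $F_{U\mid X}(\tau\mid x)=F_U(\tau)$ for all $x\in\operatorname{supp}(X)$ and all $\tau\in\mathcal{T}$, where $F_{U\mid X}(\cdot\mid x)$ is the conditional cdf of $U$ given $X=x$ and $F_U$ the marginal cdf of $U$. *)

From HB Require Import structures.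
From mathcomp Require Import all_boot all_order all_algebra.
From mathcomp Require Import all_classical all_reals all_analysis.
Set Implicit Arguments. Unset Strict Implicit. Unset Printing Implicit Defensive.
Import Order.TTheory GRing.Theory Num.Theory.
Import numFieldNormedType.Exports.
Local Open Scope classical_set_scope.
Local Open Scope ring_scope.

Section Defs.
Context {d : measure_display} {T : measurableType d} {R : realType}.
Variable P : probability T R.

Definition discrete_rv (X : T -> R) : Prop :=
  measurable_fun setT X /\
  exists S : set R, countable S /\ measurable S /\ P (X @^-1` S) = 1%E.

Definition uniform01_rv (U : T -> R) : Prop :=
  measurable_fun setT U /\
  forall B : set R, measurable B ->
    P (U @^-1` B) = (@lebesgue_measure R) (B `&` `[0%R, 1%R]).

Definition supp (X : T -> R) : set R :=
  [set x | (0 < P (X @^-1` [set x]))%E].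

Definition cdf (U : T -> R) (tau : R) : R := fine (P (U @^-1` `]-oo, tau])).

Definition cond_cdf (U X : T -> R) (tau x : R) : R :=
  fine (P (U @^-1` `]-oo, tau] `&` X @^-1` [set x])) /
  fine (P (X @^-1` [set x])).

Definition T_independent (Tset : set R) (U X : T -> R) : Prop :=
  forall x tau, supp X x -> Tset tau -> cond_cdf U X tau x = cdf U tau.

(* g is a version of the conditional probability Pr(X = x | U), i.e.
   g(U) = E[1{X = x} | sigma(U)] a.s.: g is Borel, g(U) is integrable and
   E[g(U) 1{U in B}] = Pr(X = x, U in B) for every Borel B. *)
Definition cond_prob_version (X U : T -> R) (x : R) (g : R -> R) : Prop :=
  measurable_fun setT g /\
  P.-integrable setT (fun w => (g (U w))%:E) /\
  forall B : set R, measurable B ->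
    (\int[P]_(w in U @^-1` B) (g (U w))%:E)%E =
    P (U @^-1` B `&` X @^-1` [set x]).

Definition cexp_event (Y : T -> R) (A : set T) : R :=
  (\int[P]_(w in A) Y w) / fine (P A).

End Defs.

From Pilot Require Import Defs.
From HB Require Import structures.
From mathcomp Require Import all_boot all_order all_algebra.
From mathcomp Require Import all_classical all_reals all_analysis.
From mathcomp Require Import measurable_realfun.
Import Order.TTheory GRing.Theory Num.Theory.
Import numFieldNormedType.Exports.
Local Open Scope classical_set_scope.
Local Open Scope ring_scope.

(* Let F_x(t) = Pr(U <= t, X = x) and F(t) = Pr(U <= t).  As U has no atoms,
   every version g of Pr(X = x | U) satisfies
     E(g(U) | U in (t1, t2)) = (F_x(t2) - F_x(t1)) / (F(t2) - F(t1)),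
   and as U lies in [0, 1] almost surely, F_x = Pr(X = x) F holds at 0 and 1.
   So T-independence, which says F_x = Pr(X = x) F on T, gives the averaged
   identity, and conversely the identity on (0, t) gives it back at t.  The
   converse needs some version of Pr(X = x | U): the Radon-Nikodym derivative
   of B |-> Pr(U in B, X = x) with respect to the law of U. *)

Lemma measurable_preimage {d d'} {T : measurableType d} {T' : measurableType d'}
    (f : T -> T') (B : set T') :
  measurable_fun setT f -> measurable B -> measurable (f @^-1` B).
Proof. by move=> mf mB; rewrite -[_ @^-1` _]setTI; exact: mf. Qed.

Lemma fine_measure_gt0 {d} {T : measurableType d} {R : realType}
    {mu : {finite_measure set T -> \bar R}} {A : set T} :
  measurable A -> (0 < mu A)%E -> 0 < fine (mu A).
Proof.
by move=> mA muA_gt0; apply: fine_gt0; rewrite muA_gt0 ltey_eq fin_num_measure.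
Qed.

Lemma fine_measure_preimage_itv_oo {d} {T : measurableType d} {R : realType}
    {mu : {finite_measure set T -> \bar R}} {U : T -> R} {F : set T}
    {t1 t2 : R} :
  measurable_fun setT U -> measurable F ->
  t1 < t2 -> mu (U @^-1` [set t2]) = 0%E ->
  fine (mu (U @^-1` `]t1, t2[ `&` F)) =
  fine (mu (U @^-1` `]-oo, t2] `&` F)) - fine (mu (U @^-1` `]-oo, t1] `&` F)).
Proof.
move=> mU mF t12 null_t2.
have mUF B : measurable B -> measurable (U @^-1` B `&` F).
  by move=> mB; apply: measurableI => //; exact: measurable_preimage.
have -> : `]-oo, t2]%classic =
    `]-oo, t1]%classic `|` `]t1, t2[%classic `|` [set t2].
  by rewrite -itv_bndbnd_setU ?bnd_simp // setUitv1.
rewrite !preimage_setU !setIUl measureU0 //; last 3 first.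
- by apply: measurableU; exact: mUF.
- exact: mUF.
- apply: (subset_measure0 _ _ (@subIsetl _ _ F) null_t2); first exact: mUF.
  exact: measurable_preimage.
rewrite measureU //; try exact: mUF; last first.
  apply/seteqP; split => // w [[]] /=; rewrite !in_itv /= => Uw_le_t1 _.
  by move=> [/andP[t1_lt_Uw _] _]; move: Uw_le_t1; rewrite leNgt t1_lt_Uw.
rewrite fineD; first by rewrite addrAC subrr add0r.
all: by apply: fin_num_measure; exact: mUF.
Qed.

Section conditioning_on_an_atom.
Context {d : measure_display} {T : measurableType d} {R : realType}.
Context {P : probability T R} {X U : T -> R} {x : R}.

Lemma cond_cdf_eq_cdfP (tau : R) :
  measurable (X @^-1` [set x]) -> supp P X x ->
  cond_cdf P U X tau x = Defs.cdf P U tau <->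
  fine (P (U @^-1` `]-oo, tau] `&` X @^-1` [set x])) =
  fine (P (X @^-1` [set x])) * Defs.cdf P U tau.
Proof.
move=> mXx /(fine_measure_gt0 mXx) /lt0r_neq0 px_neq0; rewrite /cond_cdf.
by split => [<- | ->]; rewrite mulrC ?divfK ?mulKf.
Qed.

Lemma cexp_event_cond_prob_version (g : R -> R) (B : set R) :
  cond_prob_version P X U x g -> measurable B ->
  cexp_event P (fun w => g (U w)) (U @^-1` B) =
  fine (P (U @^-1` B `&` X @^-1` [set x])) / fine (P (U @^-1` B)).
Proof. by move=> [_ [_ gU_int]] mB; rewrite /cexp_event /Rintegral gU_int. Qed.

End conditioning_on_an_atom.

Lemma cond_prob_version_exists {d} {T : measurableType d} {R : realType}
    (P : probability T R) {X U : T -> R} {x : R} :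
  measurable_fun setT U -> measurable (X @^-1` [set x]) ->
  exists g, cond_prob_version P X U x g.
Proof.
move=> mU mXx.
pose Um : {mfun T >-> R} := HB.pack U (isMeasurableFun.Build _ _ _ _ _ mU).
pose mu := distribution P Um.
(* The charge structure of a pushforward depends on the measurability proof,
   so it is not found by inference. *)
pose nu : {charge set R -> \bar R} :=
  measure_function_pushforward__canonical__charge_Charge
    (crestr (charge_of_finite_measure P) mXx) mU.
have nu_mu : nu `<< mu.
  apply: dominates_pushforward => //; apply/null_content_dominatesP => A mA PA0.
  apply: (subset_measure0 _ _ (@subIsetl _ _ _) PA0) => //.
  by apply: measurableI.
pose f := Radon_Nikodym nu mu.
have f_int : mu.-integrable setT f := Radon_Nikodym_integrable nu_mu.
have mf : measurable_fun setT f := measurable_int _ f_int.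
have fineK_f : EFin \o (fine \o f) = f.
  by apply: funext => y /=; rewrite fineK // Radon_Nikodym_fin_num.
have fU_int : P.-integrable setT (f \o U).
  apply/integrableP; split; first exact: measurableT_comp.
  case/integrableP: f_int => _.
  rewrite ge0_integral_pushforward ?preimage_setT //.
  exact: measurableT_comp.
exists (fine \o f); split; last split.
- by apply/measurable_EFinP; rewrite fineK_f.
- by rewrite (_ : (fun w => _) = f \o U) // -fineK_f.
move=> B mB; rewrite (_ : (fun w => _) = f \o U); last by rewrite -fineK_f.
rewrite -integral_pushforward //; last first.
  by apply: integrableS fU_int => //; exact: measurable_preimage.
exact: (esym (Radon_Nikodym_integral nu_mu mB)).
Qed.

Section uniform01.
Context {d : measure_display} {T : measurableType d} {R : realType}.
Context {P : probability T R} {U : T -> R}.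
Hypothesis U01 : uniform01_rv P U.

Let mU : measurable_fun setT U := U01.1.
Let hU := U01.2.

Let lebesgue_sub1 (a : R) (B : set R) : measurable B -> B `<=` [set a] ->
  (@lebesgue_measure R) B = 0%E.
Proof.
move=> mB Ba; apply/eqP.
by rewrite -measure_le0 -(lebesgue_measure_set1 a) le_measure ?inE.
Qed.

Lemma measure_uniform01_set1 (t : R) : P (U @^-1` [set t]) = 0%E.
Proof.
rewrite hU //; apply: (@lebesgue_sub1 t); first exact: measurableI.
exact: subIsetl.
Qed.

Lemma measure_uniform01_le0 (tau : R) (F : set T) : tau <= 0 -> measurable F ->
  P (U @^-1` `]-oo, tau] `&` F) = 0%E.
Proof.
move=> tau_le0 mF.
have null_le0 : P (U @^-1` `]-oo, 0]) = 0%E.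
  rewrite hU //; apply: (@lebesgue_sub1 0); first exact: measurableI.
  move=> y [/=]; rewrite !in_itv /= => y_le0 /andP[y_ge0 _].
  by apply/eqP; rewrite eq_le y_le0.
apply: (subset_measure0 _ _ _ null_le0).
- by apply: measurableI => //; exact: measurable_preimage.
- exact: measurable_preimage.
- move=> w [/=]; rewrite !in_itv /= => Uw_le_tau _; exact: le_trans tau_le0.
Qed.

Lemma measure_uniform01_le1 (F : set T) : measurable F ->
  P (U @^-1` `]-oo, 1] `&` F) = P F.
Proof.
move=> mF.
have null_gt1 : P (U @^-1` `]1, +oo[) = 0%E.
  rewrite hU // (_ : _ `&` _ = set0) ?measure0 //.
  apply/seteqP; split => // y [/=]; rewrite !in_itv /= andbT => y_gt1.
  by move=> /andP[_ y_le1]; move: y_gt1; rewrite ltNge y_le1.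
have null_gt1F : P (U @^-1` `]1, +oo[ `&` F) = 0%E.
  apply: (subset_measure0 _ _ _ null_gt1).
  - by apply: measurableI => //; exact: measurable_preimage.
  - exact: measurable_preimage.
  - exact: subIsetl.
rewrite -[in RHS](setTI F) -(preimage_setT U) -(itv_setU_setT false 1).
rewrite preimage_setU setIUl measureU0 //.
- by apply: measurableI => //; exact: measurable_preimage.
- by apply: measurableI => //; exact: measurable_preimage.
Qed.

Lemma measure_uniform01_itv0_gt0 (tau : R) : 0 < tau ->
  (0 < P (U @^-1` `]0%R, tau[))%E.
Proof.
move=> tau_gt0; rewrite hU //.
apply: (@lt_le_trans _ _ ((@lebesgue_measure R) `]0, Num.min tau 1[%classic)).
  rewrite lebesgue_measure_itv /= lte_fin lt_min tau_gt0 ltr01 sube0.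
  by rewrite lte_fin lt_min tau_gt0 ltr01.
apply: le_measure; rewrite ?inE //; first exact: measurableI.
move=> y /=; rewrite !in_itv /= lt_min => /andP[y_gt0 /andP[y_lt_tau y_lt1]].
by rewrite y_gt0 y_lt_tau (ltW y_gt0) (ltW y_lt1).
Qed.

Lemma cdf_uniform01_le0 (tau : R) : tau <= 0 -> Defs.cdf P U tau = 0.
Proof.
by move=> tau_le0; rewrite /Defs.cdf -[U @^-1` _]setIT measure_uniform01_le0.
Qed.

Lemma cdf_uniform01_1 : Defs.cdf P U 1 = 1.
Proof.
rewrite /Defs.cdf -[U @^-1` _]setIT measure_uniform01_le1 //.
by rewrite probability_setT.
Qed.

Lemma cdf_uniform01_sub (t1 t2 : R) : t1 < t2 ->
  Defs.cdf P U t2 - Defs.cdf P U t1 = fine (P (U @^-1` `]t1, t2[)).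
Proof.
move=> t12; rewrite /Defs.cdf -[U @^-1` `]t1, t2[]setIT.
rewrite (fine_measure_preimage_itv_oo mU _ t12 (measure_uniform01_set1 t2)) //.
by rewrite !setIT.
Qed.

Lemma fine_measure_uniform01_le_01 (tau : R) (F : set T) :
  measurable F -> [set 0; 1] tau ->
  fine (P (U @^-1` `]-oo, tau] `&` F)) = fine (P F) * Defs.cdf P U tau.
Proof.
move=> mF [-> | ->].
- by rewrite cdf_uniform01_le0 // measure_uniform01_le0 ?mulr0.
- by rewrite cdf_uniform01_1 measure_uniform01_le1 ?mulr1.
Qed.

Lemma cexp_event_uniform01_itv_oo {X : T -> R} {x : R} {g : R -> R}
    {t1 t2 : R} :
  measurable (X @^-1` [set x]) -> cond_prob_version P X U x g -> t1 < t2 ->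
  cexp_event P (fun w => g (U w)) (U @^-1` `]t1, t2[) =
  (fine (P (U @^-1` `]-oo, t2] `&` X @^-1` [set x])) -
   fine (P (U @^-1` `]-oo, t1] `&` X @^-1` [set x]))) /
  (Defs.cdf P U t2 - Defs.cdf P U t1).
Proof.
move=> mXx g_version t12.
rewrite (cexp_event_cond_prob_version _ _ g_version) // cdf_uniform01_sub //.
have U_t2_null := measure_uniform01_set1 t2.
by rewrite (fine_measure_preimage_itv_oo mU mXx t12 U_t2_null).
Qed.

End uniform01.

Theorem theorem3 (d : measure_display) (T : measurableType d) (R : realType)
  (P : probability T R) (X U : T -> R) (Tset : set R) :
  discrete_rv P X -> uniform01_rv P U ->
  (T_independent P Tset U X <->
   forall t1 t2 : R,
     (Tset `|` [set 0; 1]) t1 -> (Tset `|` [set 0; 1]) t2 -> t1 < t2 ->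
     (0 < P (U @^-1` `]t1, t2[))%E ->
     forall x : R, supp P X x ->
     forall g : R -> R, cond_prob_version P X U x g ->
       cexp_event P (fun w => g (U w)) (U @^-1` `]t1, t2[) =
       fine (P (X @^-1` [set x]))).
Proof.
move=> [mX _] U01; have mU := U01.1.
have mXx x : measurable (X @^-1` [set x]) by exact: measurable_preimage.
split => [indep t1 t2 Tt1 Tt2 t12 itv_gt0 x Xx g g_version | avg x tau Xx Ttau].
- have F_xE tau : (Tset `|` [set 0; 1]) tau ->
      fine (P (U @^-1` `]-oo, tau] `&` X @^-1` [set x])) =
      fine (P (X @^-1` [set x])) * Defs.cdf P U tau.
    case=> [Ttau | tau01]; last exact: fine_measure_uniform01_le_01.
    exact/(cond_cdf_eq_cdfP _ (mXx x) Xx)/indep.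
  rewrite (cexp_event_uniform01_itv_oo U01 (mXx x) g_version t12) !F_xE //.
  rewrite -mulrBr mulfK // (cdf_uniform01_sub U01 _ _ t12) lt0r_neq0 //.
  by apply: fine_measure_gt0 itv_gt0; exact: measurable_preimage.
- apply/(cond_cdf_eq_cdfP _ (mXx x) Xx).
  have [tau_le0 | tau_gt0] := leP tau 0.
    by rewrite (cdf_uniform01_le0 U01) // (measure_uniform01_le0 U01) ?mulr0.
  have [g g_version] := cond_prob_version_exists P mU (mXx x).
  have := avg 0 tau (or_intror (or_introl erefl)) (or_introl Ttau) tau_gt0
    (measure_uniform01_itv0_gt0 U01 _ tau_gt0) x Xx g g_version.
  rewrite (cexp_event_uniform01_itv_oo U01 (mXx x) g_version tau_gt0).
  rewrite (measure_uniform01_le0 U01 0) // (cdf_uniform01_le0 U01 0) // !subr0.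
  move=> px_eq; rewrite -px_eq divfK //.
  (* F / G = Pr(X = x) > 0 rules out G = 0, as F / 0 = 0. *)
  apply: contraTneq (fine_measure_gt0 (mXx x) Xx) => cdf_eq0.
  by rewrite -px_eq cdf_eq0 invr0 mulr0 ltxx.
Qed.
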